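(* Let $r\ge 1$ and let $K$ be a pure $r$-dimensional simplicial complex on $n$ vertices with $\beta_r(K)=t$, where $1\le t\le n-r-1$. Then $$\mathfrak{q}_{r-1}(K)\le rn-r^2+t+1.$$
   Context: A (finite abstract) simplicial complex $K$ on a finite vertex set $V(K)$ is a family of subsets of $V(K)$ closed under taking subsets and containing every singleton; it is on $n$ vertices if $|V(K)|=n$. An $i$-face is a member of cardinality $i+1$; $S_i(K)$ is the set of $i$-faces; facets are inclusion-maximal faces; $K$ is pure if all facets have the same dimension. $\beta_r(K)=\dim_{\mathbb R}H_r(K;\mathbb R)$ is the $r$-th Betti number (real simplicial homology). For an $i$-face $F$, $d_K(F)$ is the number of $(i+1)$-faces containing $F$; two distinct $i$-faces are up-neighbors if their union is an $(i+1)$-face. The signless up Laplacian $Q_i^{\mathrm{up}}(K)$ is the operator on $\mathbb{R}^{S_i(K)}$ given by $(Q_i^{\mathrm{up}}(K)f)(F)=d_K(F)f(F)+\sum_{F'\text{ up-neighbor of }F}f(F')$, and $\mathfrak{q}_i(K)$ is its largest eigenvalue. *)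

From mathcomp Require Import all_boot all_order all_algebra.
From mathcomp Require Import reals.
Set Implicit Arguments. Unset Strict Implicit. Unset Printing Implicit Defensive.
Import Order.TTheory GRing.Theory Num.Theory.
Local Open Scope ring_scope.

(* A finite abstract simplicial complex with vertex set the finite type T
   (so it is "on n vertices" with n = #|T|). *)
Definition simplicial_complex (T : finType) (K : {set {set T}}) : Prop :=
  (forall F G : {set T}, F \in K -> G \subset F -> G \in K) /\
  (forall v : T, [set v] \in K).

Definition faces (T : finType) (K : {set {set T}}) (i : nat) : {set {set T}} :=
  [set F in K | #|F| == i.+1].

Definition is_facet (T : finType) (K : {set {set T}}) (F : {set T}) : bool :=
  (F \in K) && [forall G : {set T}, ((G \in K) && (F \subset G)) ==> (G == F)].

Definition pure_dim (T : finType) (K : {set {set T}}) (r : nat) : Prop :=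
  (exists F, is_facet K F) /\ (forall F, is_facet K F -> #|F| = r.+1).

Definition fval (T : finType) (K : {set {set T}}) (i : nat)
  (j : 'I_#|faces K i|) : {set T} := enum_val j.

(* incidence sign [F : G] for G = F \ {v}, with vertices ordered by enum_rank:
   (-1)^(number of vertices of F below v). Zero if G is not a facet of F. *)
Definition incidence (R : nzRingType) (T : finType) (F G : {set T}) : R :=
  if (G \subset F) && (#|F :\: G| == 1%N) then
    \sum_(v in F :\: G) (-1) ^+ #|[set u in F | (enum_rank u < enum_rank v)%N]|
  else 0.

(* boundary matrix of d_{i+1} : C_{i+1}(K;R) -> C_i(K;R), rows indexed by
   (i+1)-faces, columns by i-faces (row-vector convention: c |-> c *m bd). *)
Definition bd (R : nzRingType) (T : finType) (K : {set {set T}}) (i : nat) :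
  'M[R]_(#|faces K i.+1|, #|faces K i|) :=
  \matrix_(a, b) incidence R (fval a) (fval b).

(* dim Z_i = dim ker d_i  (d_0 = 0) *)
Definition dim_cycles (R : fieldType) (T : finType) (K : {set {set T}}) (i : nat)
  : nat :=
  if i is j.+1 then \rank (kermx (bd R K j)) else #|faces K 0|.

(* beta_i(K) = dim H_i(K;R) = dim Z_i - dim B_i, with B_i = im d_{i+1} *)
Definition betti (R : fieldType) (T : finType) (K : {set {set T}}) (i : nat)
  : nat :=
  (dim_cycles R K i - \rank (bd R K i))%N.

Definition updeg (T : finType) (K : {set {set T}}) (F : {set T}) : nat :=
  #|[set G in K | (F \subset G) && (#|G| == #|F|.+1)]|.

Definition up_neighbors (T : finType) (K : {set {set T}}) (F F' : {set T})
  : bool :=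
  (F != F') && (F :|: F' \in K) && (#|F :|: F'| == #|F|.+1).

Definition Qup (R : nzRingType) (T : finType) (K : {set {set T}}) (i : nat) :
  'M[R]_#|faces K i| :=
  \matrix_(a, b)
    if a == b then (updeg K (fval a))%:R
    else if up_neighbors K (fval a) (fval b) then 1 else 0.

(* For an eigenvector [v] of [Q = Qup K (r-1)] let [y s] be the sum of [v] over
   the (r-1)-faces of the r-face [s]; then [q * v F] is the sum of [y] over the
   r-faces containing [F].  Evaluating at an r-face [sig] maximizing [|y|]
   bounds [|q|] by the number of pairs [(F, s)] with [F] an (r-1)-face of both
   [sig] and the r-face [s].  Besides the [r+1] pairs with [s = sig], every
   r-face adjacent to [sig] gives one pair; it is determined by its vertex [w]
   outside [sig] and a facet of [sig], and all [r+1] facets occur only if [w]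
   is a cone apex: the whole boundary of the simplex [w |: sig] lies in [K].
   These boundaries are independent r-cycles, and since [K] has no
   (r+1)-faces there are at most [beta_r = t] of them.  Hence
   [q <= (r+1) + (n-r-1) r + t = r n - r^2 + t + 1]. *)

From mathcomp Require Import all_boot all_order all_algebra.
From mathcomp Require Import reals.
From mathcomp Require Import zify lra.
Set Implicit Arguments. Unset Strict Implicit. Unset Printing Implicit Defensive.
Import Order.TTheory GRing.Theory Num.Theory.

Lemma card_faces (T : finType) (K : {set {set T}}) i s :
  s \in faces K i -> #|s| = i.+1.
Proof. by rewrite inE => /andP[_ /eqP]. Qed.

Lemma card_fval (T : finType) (K : {set {set T}}) i (a : 'I_#|faces K i|) :
  #|fval a| = i.+1.
Proof. exact/card_faces/enum_valP. Qed.

Section Incidence.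
Local Open Scope ring_scope.
Variables (R : nzRingType) (T : finType).

Definition rank_below (P : {set T}) (x : T) : nat :=
  #|[set u in P | (enum_rank u < enum_rank x)%N]|.

Lemma incidence_setD1 (P : {set T}) x :
  x \in P -> incidence R P (P :\ x) = (-1) ^+ rank_below P x.
Proof.
move=> xP; have Px : P :\: (P :\ x) = [set x].
  by apply/setP=> u; rewrite !inE; case: eqVneq => [->|] /=; rewrite ?xP ?andNb.
by rewrite /incidence subD1set Px cards1 big_set1.
Qed.

Lemma incidence_neq0 (F H : {set T}) :
  incidence R F H != 0 -> exists2 x, x \in F & H = F :\ x.
Proof.
rewrite /incidence; case: ifP => [/andP[sHF /cards1P[x eFH]] _|]; last by rewrite eqxx.
have /setDP[xF xH] : x \in F :\: H by rewrite eFH set11.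
exists x => //; apply/setP=> u; rewrite !inE.
have := congr1 (fun A : {set T} => u \in A) eFH; rewrite /= !inE.
case: eqVneq => [->|_ /=]; first by rewrite (negbTE xH).
by case: (boolP (u \in H)) => [/(subsetP sHF)->|_ /= ->].
Qed.

Lemma rank_below_setD1_lt (P : {set T}) a b :
  a \in P -> (enum_rank a < enum_rank b)%N ->
  rank_below (P :\ a) b = (rank_below P b).-1.
Proof.
move=> aP lt; rewrite /rank_below (cardsD1 a [set u in P | _]) !inE aP lt.
by apply: eq_card => u; rewrite !inE andbA.
Qed.

Lemma rank_below_setD1_gt (P : {set T}) a b :
  (enum_rank a < enum_rank b)%N -> rank_below (P :\ b) a = rank_below P a.
Proof.
move=> lt; apply: eq_card => u; rewrite !inE.
by case: eqVneq => [->|] //=; rewrite ltnNge (ltnW lt) andbF.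
Qed.

Lemma incidence_setD1_swap (P : {set T}) a b :
  a \in P -> b \in P -> a != b ->
  incidence R P (P :\ a) * incidence R (P :\ a) (P :\ a :\ b)
  + incidence R P (P :\ b) * incidence R (P :\ b) (P :\ b :\ a) = 0.
Proof.
wlog lt : a b / (enum_rank a < enum_rank b)%N => [wlog_lt aP bP nab|aP bP nab].
  case: (ltngtP (enum_rank a) (enum_rank b)) => [lt|lt|/val_inj/enum_rank_inj eab].
  - exact: wlog_lt.
  - by rewrite addrC; apply: wlog_lt; rewrite // eq_sym.
  - by rewrite eab eqxx in nab.
have aPb : a \in P :\ b by rewrite !inE aP andbT.
have bPa : b \in P :\ a by rewrite !inE bP eq_sym nab.
rewrite !incidence_setD1 // rank_below_setD1_lt // rank_below_setD1_gt //.
have : (0 < rank_below P b)%N.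
  by rewrite card_gt0; apply/set0Pn; exists a; rewrite !inE aP lt.
case: (rank_below P b) => // c _ /=.
by rewrite exprS mulN1r mulNr -!exprD addnC subrr.
Qed.

Lemma incidence_mul_neq0 (P s G : {set T}) :
  incidence R P s * incidence R s G != 0 ->
  exists a b, [/\ a \in P, b \in P :\ a, s = P :\ a & G = P :\ a :\ b].
Proof.
case: (eqVneq (incidence R P s) 0) => [->|/incidence_neq0[a aP ->]].
  by rewrite mul0r eqxx.
case: (eqVneq (incidence R (P :\ a) G) 0) => [->|/incidence_neq0[b bP ->]].
  by rewrite mulr0 eqxx.
by exists a, b.
Qed.

(* The boundary of a boundary vanishes; [S] need only contain the facets of [P]. *)
Lemma sum_incidence_incidence (P G : {set T}) (S : {set {set T}}) :
  (forall x, x \in P -> P :\ x \in S) ->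
  \sum_(s in S) incidence R P s * incidence R s G = 0.
Proof.
move=> PS.
have [/existsP[s0 /incidence_mul_neq0[a [b [aP /setD1P[nba bP] _ eG]]]]|] :=
  boolP [exists s, incidence R P s * incidence R s G != 0]; last first.
  by rewrite negb_exists => /forallP zero; apply: big1 => s _; apply/eqP/negPn.
have eGb : G = P :\ b :\ a by rewrite eG; apply/setP=> u; rewrite !inE andbCA.
have nab : a != b by rewrite eq_sym.
have nPab : P :\ b != P :\ a.
  by apply: contraNneq nab => /setP/(_ a); rewrite !inE eqxx aP /= andbT => /negbFE.
rewrite (bigD1 (P :\ a)) ?PS //= (bigD1 (P :\ b)) /= ?PS ?nPab //.
rewrite big1 ?addr0; first by rewrite {1}eG eGb incidence_setD1_swap.
move=> s /andP[/andP[_ nsa] nsb]; apply/eqP/negPn/negP.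
case/incidence_mul_neq0=> x [y [xP _ es eGx]].
have : x \notin G by rewrite eGx !inE eqxx andbF.
rewrite eG !inE xP andbT negb_and !negbK.
by case/orP=> /eqP ex; [move: nsb | move: nsa]; rewrite es ex eqxx.
Qed.

End Incidence.

Section Star.
Variables (T : finType) (K : {set {set T}}) (k : nat) (sig : {set T}).
Hypothesis sigF : sig \in faces K k.+1.

Local Notation F := (faces K k.+1).

Definition cone_apexes : {set T} :=
  [set w | (w \notin sig) && [forall v in sig, w |: (sig :\ v) \in K]].

Lemma cone_apexes_notin w : w \in cone_apexes -> w \notin sig.
Proof. by rewrite inE => /andP[]. Qed.

Lemma cone_facet_face w x : w \in cone_apexes -> x \in w |: sig ->
  (w |: sig) :\ x \in F.
Proof.
rewrite inE => /andP[wn /forallP coneK].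
have [->|nxw] := eqVneq x w; first by rewrite setU1K.
rewrite !inE (negbTE nxw) /= => xs.
have -> : (w |: sig) :\ x = w |: (sig :\ x).
  by apply/setP=> u; rewrite !inE; case: (eqVneq u w) => [->|] /=; rewrite ?andbT 1?eq_sym.
rewrite (implyP (coneK x) xs) cardsU1 !inE (negbTE wn) andbF /=.
by rewrite -(card_faces sigF) (cardsD1 x sig) xs.
Qed.

Definition common_faces (s : {set T}) : nat :=
  #|[set a : 'I_#|faces K k| | fval a \subset sig :&: s]|.

Lemma common_faces_le_bin s : common_faces s <= 'C(#|sig :&: s|, k.+1).
Proof.
rewrite /common_faces -cards_draws -(card_imset _ (@enum_val_inj _ (mem (faces K k)))).
apply: subset_leq_card; apply/subsetP => A /imsetP[a]; rewrite inE => sa ->.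
by rewrite inE; apply/andP; split; [exact: sa | rewrite (card_fval a)].
Qed.

Definition adjacent_faces : {set {set T}} :=
  [set s in F | (s != sig) && (#|sig :&: s| == k.+1)].

Lemma common_faces_le s : s \in F -> s != sig ->
  common_faces s <= (s \in adjacent_faces).
Proof.
move=> sF ns; apply: leq_trans (common_faces_le_bin s) _; rewrite inE sF ns /=.
have : #|sig :&: s| <= k.+1.
  rewrite leqNgt; move: ns; apply: contra => gtI.
  have cI : #|sig :&: s| = k.+2.
    by apply/eqP; rewrite eqn_leq gtI -(card_faces sF) subset_leq_card ?subsetIr.
  have /eqP Is : sig :&: s == s by rewrite eqEcard subsetIr cI (card_faces sF) /=.
  have /eqP Isig : sig :&: s == sig by rewrite eqEcard subsetIl cI (card_faces sigF) /=.
  by rewrite -Is Isig.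
rewrite leq_eqVlt => /orP[/eqP->|lt]; first by rewrite binn eqxx.
by rewrite bin_small.
Qed.

Lemma sum_common_faces_le :
  \sum_(s in F) common_faces s <= k.+2 + #|adjacent_faces|.
Proof.
rewrite (bigD1 sig) //= leq_add //.
  by apply: leq_trans (common_faces_le_bin sig) _; rewrite setIid (card_faces sigF) binSn.
rewrite -sum1_card big_mkcond [leqRHS]big_mkcond /=; apply: leq_sum => s _.
case: ifP => [/andP[sF ns]|_] //; have := common_faces_le sF ns.
by case: (s \in adjacent_faces).
Qed.

Definition adjacent_through (w : T) : {set {set T}} :=
  [set s in adjacent_faces | w \in s].

(* Each adjacent face has exactly one vertex outside [sig]. *)
Lemma card_adjacent_faces :
  #|adjacent_faces| = \sum_(w in ~: sig) #|adjacent_through w|.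
Proof.
have cardD : {in adjacent_faces, forall s, #|s :\: sig| = 1}.
  move=> s; rewrite !inE => /andP[/andP[_ /eqP cs] /andP[_ /eqP cI]].
  by move: (cardsID sig s); rewrite setIC cI cs; lia.
transitivity (\sum_(s in adjacent_faces) \sum_(w in ~: sig) (if w \in s then 1 else 0)).
  rewrite -sum1_card; apply: eq_bigr => s adj.
  rewrite -big_mkcondr sum1dep_card -(cardD s adj).
  by apply: eq_card => w; rewrite !inE andbC.
rewrite exchange_big; apply: eq_bigr => w _.
by rewrite -big_mkcondr sum1dep_card; apply: eq_card => s; rewrite !inE.
Qed.

(* [s] is rebuilt from its trace [sig :&: s], one of the [k.+2] facets of
   [sig]; when [w] is not a cone apex, some facet of [sig] is never hit. *)
Lemma card_adjacent_through w : w \notin sig ->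
  #|adjacent_through w| <= k.+1 + (w \in cone_apexes).
Proof.
move=> wn.
have rebuild : {in adjacent_through w, cancel (fun s => sig :&: s) (fun A => w |: A)}.
  move=> s; rewrite !inE => /andP[/andP[/andP[_ /eqP cs] /andP[_ /eqP cI]] ws].
  apply/eqP; rewrite eqEcard subUset sub1set ws subsetIr cardsU1 cI !inE (negbTE wn).
  by rewrite cs /= add1n.
rewrite -(card_in_imset (can_in_inj rebuild)).
set D := [set A : {set T} | (A \subset sig) && (#|A| == k.+1)].
have cD : #|D| = k.+2 by rewrite cards_draws (card_faces sigF) binSn.
have traceD : [set sig :&: s | s in adjacent_through w] \subset D.
  apply/subsetP=> _ /imsetP[s + ->]; rewrite !inE => /andP[/andP[_ /andP[_ ->]] _].
  by rewrite subsetIl.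
case wC: (w \in cone_apexes); first by rewrite addn1 -cD subset_leq_card.
move: wC; rewrite inE wn /= => /negbT; rewrite negb_forall => /existsP[v].
rewrite negb_imply => /andP[vs nK].
have vD : sig :\ v \in D.
  by rewrite inE subD1set /= -eqSS -(card_faces sigF) (cardsD1 v sig) vs add1n.
suff /subset_leq_card : [set sig :&: s | s in adjacent_through w] \subset D :\ (sig :\ v).
  by move: cD; rewrite (cardsD1 (sig :\ v)) vD addn0 add1n => -[<-].
apply/subsetP=> _ /imsetP[s sw ->]; rewrite in_setD1 (subsetP traceD) ?imset_f // andbT.
apply: contra nK => /eqP trace_s; rewrite -trace_s rebuild //.
by move: sw; rewrite !inE => /andP[/andP[/andP[]]].
Qed.

Lemma sum_common_faces_bound :
  \sum_(s in F) common_faces s + k.+1 ^ 2 <= k.+1 * #|T| + #|cone_apexes| + 1.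
Proof.
have apexes : \sum_(w in ~: sig) (w \in cone_apexes) = #|cone_apexes|.
  rewrite -sum1_card big_mkcond [RHS]big_mkcond; apply: eq_bigr => w _.
  rewrite inE; case: (boolP (w \in cone_apexes)) => [/cone_apexes_notin -> //|_].
  by case: (w \in sig).
have through : \sum_(w in ~: sig) #|adjacent_through w|
    <= \sum_(w in ~: sig) (k.+1 + (w \in cone_apexes)).
  by apply: leq_sum => w; rewrite inE; exact: card_adjacent_through.
rewrite big_split /= sum_nat_const apexes in through.
have := sum_common_faces_le; rewrite card_adjacent_faces.
have := cardsC sig; rewrite (card_faces sigF) => <-.
(* [set] merges two syntactically different copies of this sum for [nia]. *)
move: through; set A := \sum_(w in ~: sig) _; nia.
Qed.

End Star.

Section ConeCycles.
Local Open Scope ring_scope.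
Variables (R : fieldType) (T : finType) (K : {set {set T}}) (k : nat) (sig : {set T}).
Hypothesis sigF : sig \in faces K k.+1.

Local Notation W := (cone_apexes K sig).

(* Row [w] is the boundary of the simplex [w |: sig]: a [k.+1]-cycle of [K]. *)
Definition cone_mx : 'M[R]_(#|W|, #|faces K k.+1|) :=
  \matrix_(i, j) incidence R (enum_val i |: sig) (fval j).

Lemma cone_mx_boundary : cone_mx *m bd R K k = 0.
Proof.
apply/matrixP=> i b; rewrite !mxE.
under eq_bigr do rewrite !mxE.
rewrite -(big_enum_val
  (fun s => incidence R (enum_val i |: sig) s * incidence R s (fval b))).
by apply: sum_incidence_incidence => x; apply: cone_facet_face => //; apply: enum_valP.
Qed.

(* Row [w] is the only one involving the face [w |: sig :\ v0]. *)
Lemma row_free_cone_mx : row_free cone_mx.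
Proof.
rewrite -kermx_eq0; apply/rowV0P => u /sub_kermxP u0; apply/rowP => i; rewrite mxE.
have [v0 v0s] : exists v0, v0 \in sig by apply/set0Pn; rewrite -card_gt0 (card_faces sigF).
set w := enum_val i.
have wn : w \notin sig by apply/cone_apexes_notin/enum_valP.
set tau := (w |: sig) :\ v0.
have tauF : tau \in faces K k.+1.
  by apply: cone_facet_face; rewrite ?enum_valP // !inE v0s orbT.
have := congr1 (fun M : 'rV_#|faces K k.+1| => M 0 (enum_rank_in tauF tau)) u0.
rewrite !mxE (bigD1 i) //= big1 ?addr0 => [|i' ni].
  rewrite !mxE /fval enum_rankK_in // incidence_setD1 ?inE ?v0s ?orbT //.
  by move/eqP; rewrite mulf_eq0 signr_eq0 orbF => /eqP.
rewrite !mxE /fval enum_rankK_in // /incidence.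
case: ifP => [/andP[sub _]|]; last by rewrite mulr0.
have : w \in enum_val i' |: sig.
  apply: (subsetP sub); rewrite !inE eqxx andbT.
  by apply/eqP => wv0; rewrite wv0 v0s in wn.
by rewrite !inE (negbTE wn) orbF => /eqP/enum_val_inj ii'; rewrite ii' eqxx in ni.
Qed.

Lemma card_cone_apexes_le_cycles : (#|W| <= \rank (kermx (bd R K k)))%N.
Proof.
have /eqP <- := row_free_cone_mx.
by apply: mxrankS; apply/sub_kermxP; exact: cone_mx_boundary.
Qed.

End ConeCycles.

Section Spectral.
Local Open Scope ring_scope.
Variables (R : realFieldType) (T : finType) (K : {set {set T}}) (k : nat).

Local Notation F := (faces K k.+1).

(* [Qup] is the Gram matrix of the unsigned incidence between [k]- and [k.+1]-faces. *)
Lemma Qup_cofaces (a b : 'I_#|faces K k|) :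
  Qup R K k a b = #|[set s in F | fval a :|: fval b \subset s]|%:R.
Proof.
rewrite mxE; have [<-|nab] := eqVneq a b.
  rewrite setUid /updeg card_fval; congr _%:R; apply: eq_card => s.
  by rewrite !inE andbA andbAC.
have nF : fval a != fval b by apply: contra nab => /eqP/enum_val_inj ->.
set U := fval a :|: fval b.
have cU : (k.+2 <= #|U|)%N.
  rewrite ltnNge; apply: contra nF => leU.
  have /eqP Ua : fval a == U by rewrite eqEcard subsetUl card_fval.
  have /eqP Ub : fval b == U by rewrite eqEcard subsetUr card_fval.
  by rewrite Ua Ub.
rewrite /up_neighbors nF card_fval /= -/U; case: ifP => [/andP[UK /eqP cU2]|nU].
  suff -> : [set s in F | U \subset s] = [set U] by rewrite cards1.
  apply/setP => s; rewrite !inE; apply/andP/eqP => [[/andP[_ /eqP cs] Us]|->].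
    by apply/esym/eqP; rewrite eqEcard Us cs cU2 leqnn.
  by rewrite UK cU2 eqxx subxx.
suff -> : [set s in F | U \subset s] = set0 by rewrite cards0.
apply/setP => s; rewrite !inE; apply/negP => /andP[/andP[sK /eqP cs] Us].
have /eqP Us' : U == s by rewrite eqEcard Us cs.
by rewrite Us' sK cs eqxx in nU.
Qed.

Definition face_sum (v : 'rV[R]_#|faces K k|) (s : {set T}) : R :=
  \sum_(a | fval a \subset s) v 0 a.

Lemma Qup_eigen_face_sum v q : v *m Qup R K k = q *: v ->
  forall b, q * v 0 b = \sum_(s in F | fval b \subset s) face_sum v s.
Proof.
move=> eigv b; have := congr1 (fun M : 'rV_#|faces K k| => M 0 b) eigv.
rewrite !mxE => <-; under eq_bigr do rewrite Qup_cofaces.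
transitivity (\sum_a \sum_(s in F | fval b \subset s)
                 (if fval a \subset s then v 0 a else 0)).
  apply: eq_bigr => a _; rewrite -sumr_const mulr_sumr big_mkcond [RHS]big_mkcond.
  apply: eq_bigr => s _; rewrite !inE subUset.
  by case: (s \in K); case: (#|s| == k.+2); case: (fval b \subset s);
     case: (fval a \subset s); rewrite /= ?mulr1.
by rewrite exchange_big; apply: eq_bigr => s _; rewrite /face_sum [RHS]big_mkcond.
Qed.

Lemma sum_common_faces_exchange sig :
  (\sum_(s in F) common_faces K k sig s
   = \sum_(a : 'I_#|faces K k| | fval a \subset sig) #|[set s in F | fval a \subset s]|)%N.
Proof.
rewrite /common_faces; under eq_bigr do rewrite -sum1dep_card big_mkcond.
rewrite exchange_big [RHS]big_mkcond; apply: eq_bigr => a _.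
case: ifP => [a_sig|a_sig]; last by rewrite big1 // => s _; rewrite subsetI a_sig.
by rewrite -sum1dep_card big_mkcondr; apply: eq_bigr => s _; rewrite subsetI a_sig.
Qed.

Lemma eigen_face_sum_le v q sig : v *m Qup R K k = q *: v -> sig \in F ->
  {in F, forall s, `|face_sum v s| <= `|face_sum v sig|} ->
  `|q| * `|face_sum v sig| <= (\sum_(s in F) common_faces K k sig s)%:R * `|face_sum v sig|.
Proof.
move=> eigv sigF maxsig.
have qy : q * face_sum v sig
    = \sum_(a : 'I_#|faces K k| | fval a \subset sig)
        \sum_(s in F | fval a \subset s) face_sum v s.
  by rewrite {1}/face_sum mulr_sumr; apply: eq_bigr => a _; exact: Qup_eigen_face_sum.
rewrite -normrM qy sum_common_faces_exchange natr_sum mulr_suml.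
apply: le_trans (ler_norm_sum _ _ _) _; apply: ler_sum => a _.
rewrite -sum1dep_card natr_sum mulr_suml.
apply: le_trans (ler_norm_sum _ _ _) _; apply: ler_sum => s /andP[sF _].
by rewrite mul1r maxsig.
Qed.

Lemma eigenvalue_Qup_le q : eigenvalue (Qup R K k) q ->
  q <= (\max_(sig in F) \sum_(s in F) common_faces K k sig s)%:R.
Proof.
case/eigenvalueP => v eigv vnz.
case: (pickP [pred s in F | face_sum v s != 0]) => [s0 /andP[s0F ys0]|zero].
  case: (@arg_maxP _ _ _ s0 (mem F) (fun s => `|face_sum v s|) s0F) => sig sigF maxsig.
  have ysig : 0 < `|face_sum v sig|.
    by apply: lt_le_trans (maxsig _ s0F); rewrite normr_gt0.
  have := eigen_face_sum_le eigv sigF maxsig; rewrite ler_pM2r // => qN.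
  apply: le_trans (ler_norm q) (le_trans qN _); rewrite ler_nat.
  exact: leq_bigmax_cond.
have [b vb] := rV0Pn _ vnz.
have := Qup_eigen_face_sum eigv b; rewrite big1 => [|s /andP[sF _]]; last first.
  by move: (zero s); rewrite /= sF => /negbFE/eqP.
by move/eqP; rewrite mulf_eq0 (negbTE vb) orbF => /eqP ->.
Qed.

End Spectral.

Section Pure.
Variables (T : finType) (K : {set {set T}}) (r : nat).
Hypothesis pureK : pure_dim K r.

(* A face of [K] of maximal cardinality above [G] is a facet. *)
Lemma pure_card_le G : G \in K -> #|G| <= r.+1.
Proof.
move=> GK; case: (@arg_maxnP _ G [pred H | (H \in K) && (G \subset H)] (fun H => #|H|)).
  by rewrite /= GK subxx.
move=> H /andP[HK GH] maxH.
have facetH : is_facet K H.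
  rewrite /is_facet HK; apply/forallP => H'; apply/implyP => /andP[H'K HH'].
  by rewrite eq_sym eqEcard HH' /=; apply: maxH; rewrite /= H'K (subset_trans GH HH').
by rewrite -(pureK.2 _ facetH) subset_leq_card.
Qed.

Lemma pure_faces_above : faces K r.+1 = set0.
Proof.
apply/setP => G; rewrite !inE; apply/negP => /andP[/pure_card_le leG /eqP cG].
by rewrite cG ltnn in leG.
Qed.

Lemma pure_faces_top_gt0 : 0 < #|faces K r|.
Proof.
have [[F0 facetF0] _] := pureK; apply/card_gt0P; exists F0.
by rewrite inE (pureK.2 _ facetF0) eqxx andbT; case/andP: facetF0.
Qed.

End Pure.

Lemma betti_pure_top (R : fieldType) (T : finType) (K : {set {set T}}) k :
  pure_dim K k.+1 -> betti R K k.+1 = \rank (kermx (bd R K k)).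
Proof.
move=> pureK; rewrite /betti /=.
suff -> : \rank (bd R K k.+1) = 0 by rewrite subn0.
apply/eqP; rewrite -leqn0; apply: leq_trans (rank_leq_row _) _.
by rewrite pure_faces_above // cards0.
Qed.

Local Open Scope ring_scope.

Theorem mainTheorem11 (R : realType) (T : finType) (K : {set {set T}})
  (r t : nat) :
  simplicial_complex K -> pure_dim K r -> (1 <= r)%N ->
  betti R K r = t -> (1 <= t)%N -> (t <= #|T| - r - 1)%N ->
  forall q : R, eigenvalue (Qup R K r.-1) q ->
    q <= (r * #|T|)%:R - (r ^ 2)%:R + t%:R + 1.
Proof.
move=> _ + r_gt0; case: r r_gt0 => // k _ pureK bettiK _ _ q /= /eigenvalue_Qup_le.
have [sig sigF ->] := eq_bigmax_cond
  (fun sig => \sum_(s in faces K k.+1) common_faces K k sig s) (pure_faces_top_gt0 pureK).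
set N := (\sum_(s in _) _)%N => qN.
have apexes_t : (#|cone_apexes K sig| <= t)%N.
  by rewrite -bettiK betti_pure_top //; exact: card_cone_apexes_le_cycles.
have := sum_common_faces_bound sigF; rewrite -/N => boundN.
have : (N + k.+1 ^ 2 <= k.+1 * #|T| + t + 1)%N by lia.
rewrite -(ler_nat R) !natrD mulr1n => boundR.
lra.
Qed.
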